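(* Let $G$ be a finite simple graph, $L \subseteq V(G)$, $R = V(G) \setminus L$, and $v \in L$. Let $M_v$ be a matching in $G$ each of whose edges joins a vertex of $N_R(v)$ to a vertex of $T^2_L(v)$. Then $\mathrm{pp}^2_L(v) \geq |N_L(v)| + |M_v|$, and equality holds if $M_v$ is a maximum matching among all such matchings (i.e., a maximum matching of the bipartite graph with sides $N_R(v)$ and $T^2_L(v)$ and all edges of $G$ between them).
   Context: All graphs are finite and simple. For a partition $V(G) = L \cup R$ and a vertex $v$, $N_L(v) = N(v) \cap L$ and $N_R(v) = N(v) \cap R$, and $T^2_L(v) = \{x \in L \setminus (N(v) \cup \{v\}) : N_R(x) \cap N(v) \neq \emptyset\}$, i.e. the vertices of $L$ other than $v$, not adjacent to $v$, reachable from $v$ by a path of length two whose middle vertex lies in $R$. For a vertex $v$ and a set $X \subseteq V(G)$, an $(r,X)$-path packing rooted at $v$ is a family $\mathcal P$ of paths such that: every path has length at least $1$ and at most $r$; every path starts at $v$ and ends at a vertex of $X \setminus \{v\}$; the paths are pairwise vertex-disjoint except for the common start vertex $v$; and no interior vertex of any path lies in $X$. Let $\mathrm{pp}^r_X(v)$ denote the maximum size of an $(r,X)$-path packing rooted at $v$. *)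

From mathcomp Require Import all_boot all_order.
From mathcomp Require Import boolp.
Set Implicit Arguments. Unset Strict Implicit. Unset Printing Implicit Defensive.

Section Defs.
Variables (T : finType) (e : rel T).

Definition simple_graph : Prop := symmetric e /\ irreflexive e.

Definition nbh (v : T) : {set T} := [set x | e v x].

Definition nbhIn (L : {set T}) (v : T) : {set T} := nbh v :&: L.

Definition T2 (L : {set T}) (v : T) : {set T} :=
  [set x in L | (x != v) && (x \notin nbh v) &&
     [exists y, (y \in ~: L) && (y \in nbh x) && (y \in nbh v)]].

(* A path of length >= 1 starting at v is encoded by the list [p] of its
   vertices after v; the path is v :: p, its length is size p, its end
   vertex is last v p and its interior vertices are take (size p).-1 p. *)
Definition packing_path (r : nat) (X : {set T}) (v : T) (p : seq T) : bool :=
  [&& 0 < size p, size p <= r, path e v p, uniq (v :: p),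
      last v p \in X :\ v &
      all (fun x => x \notin X) (take (size p).-1 p)].

Definition path_packing (r : nat) (X : {set T}) (v : T) (P : seq (seq T)) : bool :=
  all (packing_path r X v) P &&
  pairwise (fun p q => all (fun x => x \notin q) p) P.

(* pp^r_X(v): the maximum size of an (r,X)-path packing rooted at v.
   (Any packing has at most #|T| paths, as the non-empty tails are disjoint.) *)
Definition pp (r : nat) (X : {set T}) (v : T) : nat :=
  \max_(k < #|T|.+1 | `[< exists P, path_packing r X v P /\ size P = k >]) k.

(* A matching each of whose edges joins a vertex of N_R(v) to a vertex of
   T^2_L(v); an edge {a,b} with a ∈ N_R(v), b ∈ T^2_L(v) is stored as (a,b). *)
Definition NR_T2_matching (L : {set T}) (v : T) (M : {set T * T}) : Prop :=
  (forall a b, (a, b) \in M ->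
     [/\ e a b, a \in nbhIn (~: L) v & b \in T2 L v]) /\
  (forall p q, p \in M -> q \in M ->
     (p.1 = q.1 \/ p.1 = q.2 \/ p.2 = q.1 \/ p.2 = q.2) -> p = q).

End Defs.

(* Lower bound: the one-edge paths to the vertices of N_L(v) together with the
   two-edge paths v a b for the edges (a, b) of M form a (2, L)-path packing,
   because N_L(v), N_R(v) and T^2_L(v) are pairwise disjoint.
   Upper bound: in any (2, L)-path packing the paths ending next to v end in
   distinct vertices of N_L(v), while every other path has the shape v a b with
   a in N_R(v) and b in T^2_L(v); vertex-disjointness makes these pairs (a, b)
   a matching of the required kind, so a maximum one bounds their number. *)
From mathcomp Require Import all_boot all_order.
From mathcomp Require Import boolp.

Set Implicit Arguments.
Unset Strict Implicit.
Unset Printing Implicit Defensive.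

Section VertexDisjoint.
Variable T : finType.
Implicit Types (P : seq (seq T)) (p : seq T).

Definition vertex_disjoint P : bool :=
  pairwise (fun p q => all (fun x => x \notin q) p) P.

Lemma vertex_disjoint_eq P p q x :
  vertex_disjoint P -> p \in P -> q \in P -> x \in p -> x \in q -> p = q.
Proof.
elim: P => //= p' P IH /andP[p'_disj P_disj].
rewrite !inE => /orP[/eqP->|pP] /orP[/eqP->|qP] xp xq //.
- by have := allP (allP p'_disj q qP) x xp; rewrite xq.
- by have := allP (allP p'_disj p pP) x xq; rewrite xp.
- exact: IH.
Qed.

Lemma vertex_disjoint_map_uniq (g : seq T -> T) P :
  {in P, forall p, g p \in p} -> vertex_disjoint P -> uniq (map g P).
Proof.
elim: P => //= q P IH gP /andP[q_disj P_disj].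
rewrite IH ?andbT //; last by move=> p pP; rewrite gP // inE pP orbT.
apply/mapP=> -[p pP gqp].
have := allP (allP q_disj p pP) (g q) (gP q (mem_head _ _)).
by rewrite gqp gP // inE pP orbT.
Qed.

End VertexDisjoint.

Section PathPacking.
Variables (T : finType) (e : rel T) (r : nat) (X : {set T}) (v : T).
Implicit Types (P : seq (seq T)) (p : seq T).

Lemma packing_path_last_mem p : packing_path e r X v p -> last v p \in p.
Proof. by case: p => // x p _ /=; apply: mem_last. Qed.

Lemma packing_path_head_mem p : packing_path e r X v p -> head v p \in p.
Proof. by case: p => // x p _; apply: mem_head. Qed.

Lemma packing_last_uniq P : path_packing e r X v P -> uniq (map (last v) P).
Proof.
case/andP=> P_paths P_disj; apply: vertex_disjoint_map_uniq P_disj => p pP.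
exact/packing_path_last_mem/(allP P_paths).
Qed.

Lemma size_packing_le_card P : path_packing e r X v P -> size P <= #|T|.
Proof.
by move/packing_last_uniq/card_uniqP; rewrite size_map => <-; apply: max_card.
Qed.

Lemma size_packing_le_pp P : path_packing e r X v P -> size P <= pp e r X v.
Proof.
move=> packP; have szP : size P < #|T|.+1 by rewrite ltnS size_packing_le_card.
rewrite /pp (bigD1 (Ordinal szP)) ?leq_maxl //=.
by apply/asboolP; exists P.
Qed.

Lemma pp_le n :
  (forall P, path_packing e r X v P -> size P <= n) -> pp e r X v <= n.
Proof. by move=> le_n; apply/bigmax_leqP => k /asboolP[P [/le_n + <-]]. Qed.

Lemma count_end_nbh_le P :
  path_packing e r X v P ->
  count (fun p => last v p \in nbh e v) P <= #|nbhIn e X v|.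
Proof.
move=> packP; rewrite -size_filter -(size_map (last v)) cardE.
apply: uniq_leq_size.
  exact/(subseq_uniq _ (packing_last_uniq packP))/map_subseq/filter_subseq.
move=> x /mapP[p]; rewrite mem_filter => /andP[near pP] ->.
case/andP: packP => /allP/(_ p pP)/and5P[_ _ _ _ /andP[/setD1P[_ lastX] _]] _.
by rewrite mem_enum /nbhIn in_setI near.
Qed.

End PathPacking.

Section TwoPathPacking.
Variables (T : finType) (e : rel T) (L : {set T}) (v : T).
Hypotheses (e_sym : symmetric e) (e_irr : irreflexive e) (vL : v \in L).
Implicit Types (P : seq (seq T)) (p : seq T) (M : {set T * T}).

Lemma NR_T2_matching_edge M a b :
  NR_T2_matching e L v M -> (a, b) \in M ->
  [/\ e a b, e v a && (a \notin L) & [&& b \in L, b != v & ~~ e v b]].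
Proof.
case=> edgeM _ /edgeM[ab]; rewrite /T2 /nbhIn /nbh !inE => vaL.
by case/and3P=> bL /andP[bv vb] _; rewrite bL bv vb.
Qed.

Definition star_packing M : seq (seq T) :=
  [seq [:: x] | x <- enum (nbhIn e L v)] ++ [seq [:: ab.1; ab.2] | ab <- enum M].

Lemma size_star_packing M : size (star_packing M) = #|nbhIn e L v| + #|M|.
Proof. by rewrite size_cat !size_map -!cardE. Qed.

Lemma star_packing_paths M :
  NR_T2_matching e L v M -> all (packing_path e 2 L v) (star_packing M).
Proof.
move=> matchM; rewrite all_cat !all_map; apply/andP; split; apply/allP.
  move=> x; rewrite mem_enum /nbhIn /nbh !inE => /andP[vx xL].
  have xv : x != v by apply: contraTneq vx => ->; rewrite e_irr.
  by rewrite /packing_path /= !inE vx xL xv eq_sym xv.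
move=> [a b]; rewrite mem_enum => /(NR_T2_matching_edge matchM)[ab /andP[va aL]].
case/and3P=> bL bv _.
have av : v != a by apply: contraNneq aL => <-.
have ab' : a != b by apply: contraNneq aL => ->.
by rewrite /packing_path /= !inE va ab bL aL ab' bv negb_or av eq_sym bv.
Qed.

Lemma star_packing_disjoint M :
  NR_T2_matching e L v M -> vertex_disjoint (star_packing M).
Proof.
move=> matchM; have [_ meetM] := matchM.
rewrite /vertex_disjoint pairwise_cat !pairwise_map; apply/and3P; split.
- apply/allrelP => _ _ /mapP[x xN ->] /mapP[[a b] abM ->] /=.
  rewrite mem_enum in abM; move: xN; rewrite mem_enum /nbhIn /nbh !inE andbT.
  case/andP=> vx xL.
  have [_ /andP[_ aL] /and3P[_ _ vb]] := NR_T2_matching_edge matchM abM.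
  by apply/norP; split; [apply: contraNneq aL => <- | apply: contraNneq vb => <-].
- move: (enum_uniq (nbhIn e L v)); rewrite uniq_pairwise.
  by apply: sub_pairwise => x y /=; rewrite inE andbT.
- move: (enum_uniq M); rewrite uniq_pairwise.
  apply: sub_in_pairwise (allss _) => pq pq' /[!mem_enum] pqM pq'M /= pq_neq.
  rewrite !inE !negb_or andbT -!andbA.
  apply/and4P; split; apply: contra pq_neq => /eqP meet; apply/eqP;
    apply: meetM => //; tauto.
Qed.

Lemma star_packing_packing M :
  NR_T2_matching e L v M -> path_packing e 2 L v (star_packing M).
Proof.
by move=> matchM; rewrite /path_packing star_packing_paths //;
  apply: star_packing_disjoint.
Qed.

Lemma packing_path_far p :
  packing_path e 2 L v p -> last v p \notin nbh e v ->
  [/\ e (head v p) (last v p), head v p \in nbhIn e (~: L) v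
    & last v p \in T2 e L v].
Proof.
case: p => [|a [|b [|? ?]]] //=; rewrite /packing_path /nbh /=.
  by case/and4P=> /andP[va _] _ _ _; rewrite inE va.
case/and5P=> /and3P[va ab _] _ /setD1P[bv bL] aL _; rewrite inE => vb.
split=> //; first by rewrite /nbhIn /nbh !inE va.
rewrite /T2 /nbh !inE bL bv vb /=.
by apply/existsP; exists a; rewrite !inE aL va e_sym ab.
Qed.

Definition far_edges P : {set T * T} :=
  [set ep in [seq (head v p, last v p) | p <- P & last v p \notin nbh e v]].

Lemma far_edges_uniq P :
  path_packing e 2 L v P ->
  uniq [seq (head v p, last v p) | p <- P & last v p \notin nbh e v].
Proof.
move=> packP; apply: (map_uniq (f := snd)); rewrite -map_comp.
exact/(subseq_uniq _ (packing_last_uniq packP))/map_subseq/filter_subseq.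
Qed.

Lemma card_far_edges P :
  path_packing e 2 L v P ->
  #|far_edges P| = count (fun p => last v p \notin nbh e v) P.
Proof.
by move=> packP; rewrite cardsE (card_uniqP (far_edges_uniq packP)) size_map
  size_filter.
Qed.

Lemma far_edges_matching P :
  path_packing e 2 L v P -> NR_T2_matching e L v (far_edges P).
Proof.
case/andP=> /allP P_paths P_disj; split.
  move=> a b; rewrite inE => /mapP[p]; rewrite mem_filter => /andP[far pP] [-> ->].
  exact: packing_path_far (P_paths p pP) far.
move=> _ _ /[!inE] /mapP[p pF ->] /mapP[q qF ->] /= meet.
rewrite !mem_filter in pF qF; case/andP: pF => _ pP; case/andP: qF => _ qP.
have hp := packing_path_head_mem (P_paths p pP).
have lp := packing_path_last_mem (P_paths p pP).
have hq := packing_path_head_mem (P_paths q qP).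
have lq := packing_path_last_mem (P_paths q qP).
have share := vertex_disjoint_eq P_disj pP qP.
suff -> : p = q by [].
case: meet => [|[|[]]] end_eq; [apply: (share _ hp) | apply: (share _ hp)
  | apply: (share _ lp) | apply: (share _ lp)]; by rewrite end_eq.
Qed.

Lemma size_packing_le P :
  path_packing e 2 L v P -> size P <= #|nbhIn e L v| + #|far_edges P|.
Proof.
move=> packP; rewrite card_far_edges // -(count_predC (fun p => last v p \in nbh e v)).
by rewrite leq_add2r (count_end_nbh_le packP).
Qed.

End TwoPathPacking.

Theorem mainTheorem2 (T : finType) (e : rel T) (L : {set T}) (v : T)
    (M : {set T * T}) :
  simple_graph e -> v \in L -> NR_T2_matching e L v M ->
  #|nbhIn e L v| + #|M| <= pp e 2 L v /\
  ((forall M' : {set T * T}, NR_T2_matching e L v M' -> #|M'| <= #|M|) ->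
     pp e 2 L v = #|nbhIn e L v| + #|M|).
Proof.
move=> [e_sym e_irr] vL matchM.
have lower : #|nbhIn e L v| + #|M| <= pp e 2 L v.
  by rewrite -size_star_packing size_packing_le_pp ?star_packing_packing.
split=> // maxM; apply/eqP; rewrite eqn_leq lower andbT.
apply: pp_le => P packP; apply: leq_trans (size_packing_le packP) _.
by rewrite leq_add2l; apply/maxM/(far_edges_matching e_sym packP).
Qed.
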